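(* Let $(V,E)$ be a finite graph with $E\neq\emptyset$ and let $p\in(0,1)$. Let $(\eta_t,\sigma_t)_{t\geq 0}$ be a continuous-time Markov jump process on $\{0,1\}^E\times\{-1,1\}^V$ with transition rates $q((\eta,\sigma),(\eta',\sigma'))$, such that at each jump at most one site or one edge is updated (i.e. $q((\eta,\sigma),(\eta',\sigma'))=0$ unless $(\eta',\sigma')$ differs from $(\eta,\sigma)$ in at most one spin or at most one edge), and which is reversible with respect to $IP$, i.e. $$IP(\eta,\sigma)\,q((\eta,\sigma),(\eta',\sigma'))=IP(\eta',\sigma')\,q((\eta',\sigma'),(\eta,\sigma))$$ for all $(\eta,\sigma),(\eta',\sigma')$. Let $(\eta,\sigma)\in\mathcal C$ be a pair of compatible configurations. If there exists $x\in V$ such that $q((\eta,\sigma),(\eta,\sigma^x))\neq 0$, then $\eta(e)=0$ for all $e\in E_x$.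
   Context: $(V,E)$ is a finite graph with unoriented edges, $E$ a set of pairs of vertices. An edge configuration is $\eta\in\{0,1\}^E$ (1 = open, 0 = closed), a spin configuration is $\sigma\in\{-1,1\}^V$. For $e=\langle x,y\rangle$, $\delta_\sigma(e)=\mathbf 1_{\sigma(x)=\sigma(y)}$. The set of compatible pairs is $\mathcal C=\{(\eta,\sigma):\eta(e)\le\delta_\sigma(e)\ \forall e\in E\}$. The Ising–FK coupling measure is $IP(\eta,\sigma)=\frac1Z\prod_{e\in E}\big(p\mathbf 1_{\eta(e)=1}\delta_\sigma(e)+(1-p)\mathbf 1_{\eta(e)=0}\big)$, with $Z$ the normalizing constant. $E_x$ is the set of edges having $x$ as an endvertex, and $\sigma^x$ is $\sigma$ with the spin at $x$ flipped. *)

From mathcomp Require Import all_boot all_order all_algebra.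
Set Implicit Arguments. Unset Strict Implicit. Unset Printing Implicit Defensive.
Import Order.TTheory GRing.Theory Num.Theory.
Local Open Scope ring_scope.

(* A finite graph: vertices V : finType, edges E : finType, each edge e having
   endpoints (ends e).1 and (ends e).2 (unoriented: only the set {x,y} matters).
   Spins in {-1,1} are encoded as booleans (true = +1, false = -1);
   edge states: true = open, false = closed. *)

Definition simple_graph (V E : finType) (ends : E -> V * V) : Prop :=
  (forall e, (ends e).1 <> (ends e).2) /\
  (forall e f, [set (ends e).1; (ends e).2] = [set (ends f).1; (ends f).2] -> e = f).

Definition econf (E : finType) := {ffun E -> bool}.
Definition sconf (V : finType) := {ffun V -> bool}.
Definition state (V E : finType) := (econf E * sconf V)%type.

Definition delta (V E : finType) (ends : E -> V * V) (s : sconf V) (e : E) : bool :=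
  s (ends e).1 == s (ends e).2.

Definition compatible (V E : finType) (ends : E -> V * V) (c : state V E) : bool :=
  [forall e, c.1 e ==> delta ends c.2 e].

Definition ES_weight (R : numFieldType) (V E : finType) (ends : E -> V * V) (p : R)
  (c : state V E) : R :=
  \prod_(e : E) (if c.1 e then p * (delta ends c.2 e)%:R else 1 - p).

Definition IP (R : numFieldType) (V E : finType) (ends : E -> V * V) (p : R)
  (c : state V E) : R :=
  ES_weight ends p c / \sum_(c' : state V E) ES_weight ends p c'.

Definition flip (V : finType) (s : sconf V) (x : V) : sconf V :=
  [ffun y => if y == x then ~~ s y else s y].

Definition incident (V E : finType) (ends : E -> V * V) (x : V) : {set E} :=
  [set e | ((ends e).1 == x) || ((ends e).2 == x)].

Definition ndiff (V E : finType) (c c' : state V E) : nat :=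
  #|[set e | c.1 e != c'.1 e]| + #|[set x | c.2 x != c'.2 x]|.

From mathcomp Require Import all_boot all_order all_algebra.
Import Order.TTheory GRing.Theory Num.Theory.
Set Implicit Arguments. Unset Strict Implicit. Unset Printing Implicit Defensive.
Local Open Scope ring_scope.

(* A compatible configuration has positive weight, while flipping the spin at
   an endpoint of an open edge makes that edge disagree and kills the weight.
   Detailed balance between a state of positive mass and one of mass zero
   forces the rate between them to vanish. *)

Section EdwardsSokal.

Variables (R : numFieldType) (V E : finType) (ends : E -> V * V).
Variable p : R.
Hypotheses (p_gt0 : 0 < p) (p_lt1 : p < 1).

Lemma ES_weight_ge0 (c : state V E) : 0 <= ES_weight ends p c.
Proof.
apply: prodr_ge0 => e _; case: (c.1 e); last by rewrite subr_ge0 ltW.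
by rewrite mulr_ge0 ?ler0n ?ltW.
Qed.

Lemma ES_weight_gt0 (c : state V E) : compatible ends c -> 0 < ES_weight ends p c.
Proof.
move=> /forallP c_comp; apply: prodr_gt0 => e _.
have := c_comp e; case: (c.1 e) => /= [->|_]; first by rewrite mulr1.
by rewrite subr_gt0.
Qed.

Lemma ES_weight_eq0 (eta : econf E) (s : sconf V) (e : E) :
  eta e -> ~~ delta ends s e -> ES_weight ends p (eta, s) = 0.
Proof.
move=> open_e /negbTE disagree_e.
by rewrite /ES_weight (bigD1 e) //= open_e disagree_e mulr0 mul0r.
Qed.

Lemma IP_gt0 (c : state V E) : compatible ends c -> 0 < IP ends p c.
Proof.
move=> c_comp; have Wc_gt0 := ES_weight_gt0 c_comp.
have Z_gt0 : 0 < \sum_(c' : state V E) ES_weight ends p c'.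
  rewrite (bigD1 c) //=; apply: ltr_wpDr Wc_gt0.
  by apply: sumr_ge0 => c' _; apply: ES_weight_ge0.
by rewrite /IP divr_gt0.
Qed.

Lemma IP_eq0 (eta : econf E) (s : sconf V) (e : E) :
  eta e -> ~~ delta ends s e -> IP ends p (eta, s) = 0.
Proof. by move=> open_e disagree_e; rewrite /IP (ES_weight_eq0 open_e disagree_e) mul0r. Qed.

End EdwardsSokal.

Lemma delta_flip_incident (V E : finType) (ends : E -> V * V) (s : sconf V)
    (x : V) (e : E) :
  (ends e).1 <> (ends e).2 -> e \in incident ends x ->
  delta ends (flip s x) e = ~~ delta ends s e.
Proof.
rewrite inE /delta !ffunE; case: (ends e) => a b /= a_neq_b.
have [a_eq_x | a_neq_x] := eqVneq a x; have [b_eq_x | b_neq_x] := eqVneq b x => //= _.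
- by case: a_neq_b; rewrite a_eq_x b_eq_x.
- by rewrite a_eq_x; case: (s x); case: (s b).
- by rewrite b_eq_x; case: (s a); case: (s x).
Qed.

Lemma reversible_rate_eq0 (R : idomainType) (S : Type) (pi : S -> R)
    (q : S -> S -> R) (c c' : S) :
  pi c * q c c' = pi c' * q c' c -> pi c != 0 -> pi c' = 0 -> q c c' = 0.
Proof.
move=> balance pi_c_neq0 pi_c'_eq0.
have /eqP : pi c * q c c' = 0 by rewrite balance pi_c'_eq0 mul0r.
by rewrite mulf_eq0 (negbTE pi_c_neq0) => /eqP.
Qed.

Theorem lemma1 (R : realFieldType) (V E : finType) (ends : E -> V * V)
  (Hsimple : simple_graph ends) (HE : (0 < #|E|)%N)
  (p : R) (Hp0 : 0 < p) (Hp1 : p < 1)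
  (q : state V E -> state V E -> R)
  (Hqpos : forall c c', c != c' -> 0 <= q c c')
  (Hqloc : forall c c', (1 < ndiff c c')%N -> q c c' = 0)
  (Hrev : forall c c', IP ends p c * q c c' = IP ends p c' * q c' c)
  (eta : econf E) (sigma : sconf V)
  (Hcomp : compatible ends (eta, sigma)) :
  forall x : V, q (eta, sigma) (eta, flip sigma x) != 0 ->
    forall e, e \in incident ends x -> eta e = false.
Proof.
move=> x q_neq0 e e_at_x; apply: contra_neqF q_neq0 => open_e.
have agree_e : delta ends sigma e by move/forallP: Hcomp => /(_ e); rewrite open_e.
have disagree_e : ~~ delta ends (flip sigma x) e.
  by rewrite (delta_flip_incident _ (Hsimple.1 e) e_at_x) agree_e.
apply: (reversible_rate_eq0 (Hrev (eta, sigma) (eta, flip sigma x))).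
- exact: lt0r_neq0 (IP_gt0 Hp0 Hp1 Hcomp).
- exact: IP_eq0 open_e disagree_e.
Qed.
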